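(* There is a satisfiability-preserving reduction from $\mathsf{C\text{-}RASP}$ to $\mathsf{C\text{-}RASP}$ with depth at most 2: there is a computable transformation mapping each $\mathsf{C\text{-}RASP}$ formula $\varphi$ to a $\mathsf{C\text{-}RASP}$ formula $\varphi'$ of depth at most $2$ (possibly over an alphabet extended by fresh propositions) such that $\varphi$ is satisfiable iff $\varphi'$ is satisfiable.
   Context: $\mathsf{C\text{-}RASP}$ formulas over a finite alphabet $\Sigma$: $\phi ::= \sigma \mid \Diamond^{-}\phi \mid \Box^{-}\phi \mid \neg\phi \mid \phi_1\wedge\phi_2 \mid \sum_{t\in\mathcal{T}}\alpha_t t\sim k$, terms $t ::= \#[\phi] \mid c$, with $\alpha_t,k,c\in\mathbb{Z}$, ${\sim}\in\{<,\le,=,\ge,>\}$. At position $i$ of $w$: $w,i\models\sigma$ iff $w_i=\sigma$; $w,i\models\Diamond^{-}\phi$ iff $w,j\models\phi$ for some $j<i$; $w,i\models\Box^{-}\phi$ iff $w,j\models\phi$ for all $j\le i$; $\#[\phi]$ evaluates to $|\{j\in[1,i]: w,j\models\phi\}|$; comparisons are integer comparisons. $w\models\phi$ iff $w,|w|\models\phi$; $\phi$ is satisfiable iff some string satisfies it. Depth: $\mathrm{dp}(\sigma)=\mathrm{dp}(c)=0$, $\neg$ preserves depth, $\wedge$ takes the maximum, $\mathrm{dp}(\#[\phi])=\mathrm{dp}(\Diamond^{-}\phi)=\mathrm{dp}(\Box^{-}\phi)=\mathrm{dp}(\phi)+1$, and a comparison has the maximal depth of its terms. *)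

From HB Require Import structures.
From mathcomp Require Import all_boot all_order all_algebra.
Set Implicit Arguments. Unset Strict Implicit. Unset Printing Implicit Defensive.
Import Order.TTheory GRing.Theory Num.Theory.
Local Open Scope ring_scope.

Inductive cmp := CLt | CLe | CEq | CGe | CGt.

Definition cmpb (c : cmp) (x y : int) : bool :=
  match c with
  | CLt => x < y | CLe => x <= y | CEq => x == y | CGe => y <= x | CGt => y < x
  end.

(* formulas over alphabet S; a comparison  sum_t alpha_t t ~ k  is
   represented by a finite list of (coefficient, term) pairs. *)
Inductive cform (S : Type) : Type :=
| Atom of S
| Dia of cform S
| Box of cform S
| Neg of cform S
| And of cform S & cform S
| Cmp of lin S & cmp & int
with lin (S : Type) : Type :=
| LNil
| LCons of int & term S & lin S
with term (S : Type) : Type :=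
| Cnt of cform S
| Const of int.

Arguments Atom {S}. Arguments Dia {S}. Arguments Box {S}. Arguments Neg {S}.
Arguments And {S}. Arguments Cmp {S}. Arguments LNil {S}. Arguments LCons {S}.
Arguments Cnt {S}. Arguments Const {S}.

(* Semantics: positions are 1-based, w_i = nth (i-1) of w. *)
Fixpoint sat (S : eqType) (w : seq S) (i : nat) (f : cform S) {struct f} : bool :=
  match f with
  | Atom a => (0 < i)%N && (onth w i.-1 == Some a)
  | Dia g => has (fun j => sat w j g) (iota 1 i.-1)
  | Box g => all (fun j => sat w j g) (iota 1 i)
  | Neg g => ~~ sat w i g
  | And g h => sat w i g && sat w i h
  | Cmp l c k => cmpb c (evl w i l) k
  end
with evl (S : eqType) (w : seq S) (i : nat) (l : lin S) {struct l} : int :=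
  match l with
  | LNil => 0
  | LCons a t l' => a * evt w i t + evl w i l'
  end
with evt (S : eqType) (w : seq S) (i : nat) (t : term S) {struct t} : int :=
  match t with
  | Cnt g => (count (fun j => sat w j g) (iota 1 i))%:Z
  | Const c => c
  end.

(* w |= phi iff w,|w| |= phi; strings are nonempty (position |w| >= 1). *)
Definition models (S : eqType) (w : seq S) (f : cform S) : bool :=
  (0 < size w)%N && sat w (size w) f.

Definition satisfiable (S : eqType) (f : cform S) : Prop :=
  exists w : seq S, models w f.

Fixpoint dp (S : Type) (f : cform S) {struct f} : nat :=
  match f with
  | Atom _ => 0
  | Dia g | Box g => (dp g).+1
  | Neg g => dp g
  | And g h => maxn (dp g) (dp h)
  | Cmp l _ _ => dpl l
  end%N
with dpl (S : Type) (l : lin S) {struct l} : nat :=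
  match l with
  | LNil => 0
  | LCons _ t l' => maxn (dpt t) (dpl l')
  end%N
with dpt (S : Type) (t : term S) {struct t} : nat :=
  match t with
  | Cnt g => (dp g).+1
  | Const _ => 0
  end%N.

(* number of subformula occurrences (postorder numbering) *)
Fixpoint sz (S : Type) (f : cform S) {struct f} : nat :=
  match f with
  | Atom _ => 1
  | Dia g | Box g | Neg g => (sz g).+1
  | And g h => (sz g + sz h).+1
  | Cmp l _ _ => (szl l).+1
  end%N
with szl (S : Type) (l : lin S) {struct l} : nat :=
  match l with
  | LNil => 0
  | LCons _ t l' => szt t + szl l'
  end%N
with szt (S : Type) (t : term S) {struct t} : nat :=
  match t with
  | Cnt g => sz g
  | Const _ => 0
  end%N.

Definition fTrue (S : Type) : cform S := Cmp LNil CEq 0.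
Definition fFalse (S : Type) : cform S := Cmp LNil CLt 0.
Definition fOr (S : Type) (a b : cform S) : cform S := Neg (And (Neg a) (Neg b)).
Definition fIff (S : Type) (a b : cform S) : cform S :=
  And (fOr (Neg a) b) (fOr a (Neg b)).
Definition bigOr (S : Type) (s : seq (cform S)) : cform S := foldr (@fOr S) (fFalse S) s.
Definition bigAnd (S : Type) (s : seq (cform S)) : cform S := foldr (@And S) (fTrue S) s.

(* extended alphabet: original letter + truth values of the K fresh propositions *)
Definition ext (S : finType) (K : nat) : finType := (S * K.-tuple bool)%type.

Definition isLetter (S : finType) (K : nat) (P : pred (ext S K)) : cform (ext S K) :=
  bigOr [seq Atom x | x <- enum P].

Definition prop (S : finType) (K : nat) (n : nat) : cform (ext S K) :=
  isLetter (fun x : ext S K => nth false x.2 n).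

Definition letter (S : finType) (K : nat) (a : S) : cform (ext S K) :=
  isLetter (fun x : ext S K => x.1 == a).

(* index of the root of a subformula occurrence g placed at offset b *)
Definition root (S : Type) (g : cform S) (b : nat) : nat := (b + sz g).-1.

Fixpoint shallowl (S : finType) (K : nat) (l : lin S) (b : nat) {struct l}
  : lin (ext S K) :=
  match l with
  | LNil => LNil
  | LCons a t l' =>
      LCons a (match t with
               | Cnt g => Cnt (prop S K (root g b))
               | Const c => Const c end)
            (shallowl K l' (b + szt t))
  end.

(* f with its immediate subformulas (placed from offset b) replaced by
   their fresh propositions; depth <= 1 *)
Definition shallow (S : finType) (K : nat) (f : cform S) (b : nat) : cform (ext S K) :=
  match f with
  | Atom a => letter K a
  | Dia g => Dia (prop S K (root g b))
  | Box g => Box (prop S K (root g b))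
  | Neg g => Neg (prop S K (root g b))
  | And g h => And (prop S K (root g b)) (prop S K (root h (b + sz g)))
  | Cmp l c k => Cmp (shallowl K l b) c k
  end.

Fixpoint cons (S : finType) (K : nat) (f : cform S) (b : nat) {struct f}
  : seq (cform (ext S K)) :=
  fIff (prop S K (root f b)) (shallow K f b) ::
  match f with
  | Atom _ => [::]
  | Dia g | Box g | Neg g => cons K g b
  | And g h => cons K g b ++ cons K h (b + sz g)
  | Cmp l _ _ => consl K l b
  end
with consl (S : finType) (K : nat) (l : lin S) (b : nat) {struct l}
  : seq (cform (ext S K)) :=
  match l with
  | LNil => [::]
  | LCons _ t l' => const K t b ++ consl K l' (b + szt t)
  end
with const (S : finType) (K : nat) (t : term S) (b : nat) {struct t}
  : seq (cform (ext S K)) :=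
  match t with
  | Cnt g => cons K g b
  | Const _ => [::]
  end.

Definition reduce (S : finType) (f : cform S) : cform (ext S (sz f)) :=
  And (Box (bigAnd (cons (sz f) f 0))) (prop S (sz f) (root f 0)).

From Pilot Require Import Defs.
From mathcomp Require Import all_boot all_order all_algebra.
Set Implicit Arguments. Unset Strict Implicit. Unset Printing Implicit Defensive.

(** Tseitin-style flattening.  Every subformula occurrence [psi] of [phi]
    gets a fresh proposition [p_psi] (occurrences are numbered in postorder, so
    the occurrence whose subtree starts at offset [b] has number [root psi b]),
    and the constraint [p_psi <-> shallow psi], where [shallow psi] is [psi] with
    its immediate subformulas replaced by their propositions, has depth at most 1.
    Hence [Box^- (/\ constraints) /\ p_phi] has depth at most 2.
    If a word satisfies every constraint at every position then, by induction
    on [psi], [p_psi] holds exactly where [psi] holds in the underlying word: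
    the operators of [shallow psi] only inspect positions up to the current one,
    where the propositions of the immediate subformulas are already correct.
    Conversely, annotating each position of a model of [phi] with the truth
    values of all subformula occurrences satisfies every constraint. *)

Scheme cform_mut := Induction for cform Sort Prop
with lin_mut := Induction for lin Sort Prop
with term_mut := Induction for term Sort Prop.
Combined Scheme cform_lin_term_mut from cform_mut, lin_mut, term_mut.

(* The offsets are those that [shallow K f b] and [cons K f b] give to the
   immediate subformula occurrences of [f]. *)
Section Kids.
Variables (S : Type) (P : cform S -> nat -> Prop).

Definition on_term (t : term S) b : Prop := if t is Cnt g then P g b else True.
Arguments on_term !t b /.

Fixpoint on_lin (l : lin S) b : Prop :=
  if l is LCons _ t l' then on_term t b /\ on_lin l' (b + szt t) else True.

Definition on_kids (f : cform S) b : Prop :=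
  match f with
  | Atom _ => True
  | Dia g | Box g | Neg g => P g b
  | And g h => P g b /\ P h (b + sz g)
  | Cmp l _ _ => on_lin l b
  end.

End Kids.

Lemma cform_kids_ind (S : Type) (P : cform S -> nat -> Prop) :
  (forall f b, on_kids P f b -> P f b) -> forall f b, P f b.
Proof.
move=> IH.
suff [] : (forall f b, P f b) /\ (forall l b, on_lin P l b) /\
          (forall t b, on_term P t b) by [].
by apply: cform_lin_term_mut => //= *; try apply: IH => /=; auto.
Qed.

Lemma on_kids_impl (S : Type) (P Q : cform S -> nat -> Prop) f b :
  on_kids (fun g c => P g c -> Q g c) f b -> on_kids P f b -> on_kids Q f b.
Proof.
case: f => [a|g|g|g|g h|l c k] //=; first by move=> [? ?] [? ?]; auto.
by elim: l b => //= a [g|c'] l IH b /= [? ?] [? ?]; auto.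
Qed.

Lemma on_kids_mono (S : Type) (P Q : cform S -> nat -> Prop) f b :
  (forall g c, P g c -> Q g c) -> on_kids P f b -> on_kids Q f b.
Proof.
move=> PQ; case: f => [a|g|g|g|g h|l c k] /=; auto; first by case; auto.
by elim: l b => //= a [g|c'] l IH b /= [? ?]; auto.
Qed.

Lemma sat_fOr (S : eqType) (w : seq S) j a b :
  sat w j (fOr a b) = sat w j a || sat w j b.
Proof. by rewrite /= -negb_or negbK. Qed.

Lemma sat_fIff (S : eqType) (w : seq S) j a b :
  sat w j (fIff a b) = (sat w j a == sat w j b).
Proof. by rewrite /fIff /fOr /=; case: (sat w j a); case: (sat w j b). Qed.

Lemma sat_bigOr (S : eqType) (w : seq S) j s :
  sat w j (bigOr s) = has (sat w j) s.
Proof. by elim: s => //= x s <-; rewrite -sat_fOr. Qed.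

Lemma sat_bigAnd (S : eqType) (w : seq S) j s :
  sat w j (bigAnd s) = all (sat w j) s.
Proof. by elim: s => //= x s ->. Qed.

Lemma sat_isLetter (S : finType) K (w : seq (ext S K)) (P : pred (ext S K)) j :
  sat w j (isLetter P) = (0 < j)%N && oapp P false (onth w j.-1).
Proof.
rewrite sat_bigOr has_map; apply/hasP/andP => [[x] | [j_gt0]].
  by rewrite mem_enum /= => Px /andP[-> /eqP->].
by case E: onth => [x|] //= Px; exists x; rewrite ?mem_enum ?j_gt0 ?E /=.
Qed.

Lemma sat_letter (S : finType) K (w : seq (ext S K)) a j :
  sat w j (letter K a) = sat (map fst w) j (Atom a).
Proof. by rewrite sat_isLetter /= onth_map; case: onth; rewrite ?andbF. Qed.

Lemma dp_isLetter (S : finType) K (P : pred (ext S K)) : dp (isLetter P) = 0%N.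
Proof. by rewrite /isLetter; elim: (enum P) => //= x s ->. Qed.

Definition constraint (S : finType) K (f : cform S) b : cform (ext S K) :=
  fIff (prop S K (Defs.root f b)) (shallow K f b).

Lemma dp_shallow (S : finType) K (f : cform S) b : (dp (shallow K f b) <= 1)%N.
Proof.
case: f => [a|g|g|g|g h|l c k] /=; rewrite ?dp_isLetter //.
by elim: l b => //= a [g|c'] l IH b /=; rewrite ?dp_isLetter geq_max IH.
Qed.

Lemma dp_constraint (S : finType) K (f : cform S) b : (dp (constraint K f b) <= 1)%N.
Proof. by rewrite /= !maxnn dp_isLetter max0n dp_shallow. Qed.

Lemma dp_bigAnd (S : Type) (s : seq (cform S)) n :
  all (fun x => dp x <= n)%N s -> (dp (bigAnd s) <= n)%N.
Proof. by elim: s => //= x s IH /andP[dpx /IH]; rewrite geq_max dpx. Qed.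

Section ConstraintDecomposition.
Variables (S : finType) (K : nat) (Q : seq (cform (ext S K)) -> Prop).
Hypotheses (Q0 : Q [::]) (Qcat : forall s t, Q (s ++ t) <-> Q s /\ Q t).

Lemma conslE l b : Q (consl K l b) <-> on_lin (fun g c => Q (cons K g c)) l b.
Proof.
elim: l b => //= a t l IH b; apply: iff_trans (Qcat _ _) _.
case: t => [g|c] /=; first exact: and_iff_compat_l (IH _).
by have := IH (b + 0); tauto.
Qed.

Lemma consE f b :
  Q (cons K f b) <-> Q [:: constraint K f b] /\ on_kids (fun g c => Q (cons K g c)) f b.
Proof.
case: f => [a|g|g|g|g h|l c k];
  apply: iff_trans (Qcat [:: _] _) (and_iff_compat_l _ _) => //.
exact: conslE.
Qed.

End ConstraintDecomposition.

Lemma dp_cons (S : finType) K (f : cform S) b : all (fun x => dp x <= 1)%N (cons K f b).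
Proof.
pose Q := all (fun x : cform (ext S K) => dp x <= 1)%N.
have Qcat s t : Q (s ++ t) <-> Q s /\ Q t by rewrite /Q all_cat; split=> /andP.
move: f b; apply: cform_kids_ind => f b IH.
by apply/(consE (Q := Q)) => //; rewrite /Q /= dp_constraint.
Qed.

Lemma dp_reduce (S : finType) (phi : cform S) : (dp (reduce phi) <= 2)%N.
Proof. by rewrite /= dp_isLetter maxn0 ltnS dp_bigAnd ?dp_cons. Qed.

(* Truth values at position [j] of all subformula occurrences of [f], in the
   postorder numbering of their fresh propositions. *)
Fixpoint labs (S : eqType) (w : seq S) j (f : cform S) {struct f} : seq bool :=
  match f with
  | Atom _ => [:: sat w j f]
  | Dia g | Box g | Neg g => labs w j g ++ [:: sat w j f]
  | And g h => labs w j g ++ labs w j h ++ [:: sat w j f]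
  | Cmp l _ _ => labsl w j l ++ [:: sat w j f]
  end
with labsl (S : eqType) (w : seq S) j (l : lin S) {struct l} : seq bool :=
  if l is LCons _ t l' then labst w j t ++ labsl w j l' else [::]
with labst (S : eqType) (w : seq S) j (t : term S) {struct t} : seq bool :=
  if t is Cnt g then labs w j g else [::].

Lemma size_labs_mut (S : eqType) (w : seq S) j :
  (forall f, size (labs w j f) = sz f) /\ (forall l, size (labsl w j l) = szl l) /\
  (forall t, size (labst w j t) = szt t).
Proof.
apply: cform_lin_term_mut => //= [g IH|g IH|g IH|g IHg h IHh|l IH c k|a t IHt l IHl];
  by rewrite !size_cat ?IH ?IHg ?IHh ?IHt ?IHl /= ?addn1 ?addnS.
Qed.

Lemma size_labs (S : eqType) (w : seq S) j f : size (labs w j f) = sz f.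
Proof. exact: (size_labs_mut w j).1. Qed.

Lemma size_labst (S : eqType) (w : seq S) j t : size (labst w j t) = szt t.
Proof. exact: (size_labs_mut w j).2.2. Qed.

Lemma last_labs (S : eqType) (w : seq S) j f : last false (labs w j f) = sat w j f.
Proof. by case: f => * //=; rewrite !last_cat. Qed.

Lemma sz_gt0 (S : Type) (f : cform S) : (0 < sz f)%N.
Proof. by case: f. Qed.

Lemma rootE (S : Type) (f : cform S) b : Defs.root f b = (b + (sz f).-1)%N.
Proof. by rewrite /Defs.root -(prednK (sz_gt0 f)) addnS. Qed.

Lemma mem_iota1_le n m i : (n <= m)%N -> i \in iota 1 n -> (0 < i <= m)%N.
Proof. by rewrite mem_iota add1n ltnS => n_le /andP[-> /leq_trans->]. Qed.

Section Faithfulness.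
Variables (S : finType) (K : nat) (w' : seq (ext S K)).
Local Notation w := (map fst w').
Local Notation N := (size w').

Definition everywhere (s : seq (cform (ext S K))) :=
  forall j, (0 < j <= N)%N -> all (sat w' j) s.

Lemma everywhereP s :
  reflect (everywhere s) (all (fun j => all (sat w' j) s) (iota 1 N)).
Proof.
apply: (iffP allP) => H j; [move=> j_in | rewrite mem_iota add1n ltnS => j_in];
  by apply: H; rewrite ?mem_iota ?add1n ?ltnS.
Qed.

Lemma everywhere_cat s t : everywhere (s ++ t) <-> everywhere s /\ everywhere t.
Proof.
split=> [H | [Hs Ht] j j_in]; last by rewrite all_cat Hs ?Ht.
by split=> j /H; rewrite all_cat => /andP[].
Qed.

Definition consistent f b := everywhere (cons K f b).

Definition agrees (g : cform S) b :=
  forall j, (0 < j <= N)%N -> sat w' j (prop S K (Defs.root g b)) = sat w j g.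

Lemma evl_shallowl l b : on_lin agrees l b ->
  forall j, (0 < j <= N)%N -> evl w' j (shallowl K l b) = evl w j l.
Proof.
elim: l b => //= a t l IH b [agr_t agr_l] j j_in; rewrite IH //; congr (_ * _ + _)%R.
case: t agr_t {agr_l} => //= g agr_g; congr (Posz _).
by apply: eq_in_count => i /mem_iota1_le i_in; apply/agr_g/i_in; case/andP: j_in.
Qed.

Lemma sat_shallow f b : on_kids agrees f b ->
  forall j, (0 < j <= N)%N -> sat w' j (shallow K f b) = sat w j f.
Proof.
case: f => [a|g|g|g|g h|l c k] /= agr j j_in; have j_le : (j <= N)%N by case/andP: j_in.
- exact: sat_letter.
- by apply: eq_in_has => i /mem_iota1_le i_in; apply/agr/i_in/(leq_trans (leq_pred j)).
- by apply: eq_in_all => i /mem_iota1_le i_in; apply/agr/i_in.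
- by rewrite agr.
- by case: agr => agr_g agr_h; rewrite agr_g ?agr_h.
- by rewrite evl_shallowl.
Qed.

Lemma constraint_agrees f b : on_kids agrees f b ->
  everywhere [:: constraint K f b] <-> agrees f b.
Proof.
move=> agr; split=> H j j_in; move: (H j j_in); rewrite all_seq1 sat_fIff sat_shallow //.
  by move/eqP.
by move=> ->.
Qed.

Lemma consistentE f b :
  consistent f b <-> everywhere [:: constraint K f b] /\ on_kids consistent f b.
Proof. exact: (@consE _ _ everywhere (fun _ _ => isT) everywhere_cat). Qed.

Lemma consistent_agrees f b : consistent f b -> agrees f b.
Proof.
move: f b; apply: cform_kids_ind => f b IH /consistentE[head kids].
exact/(constraint_agrees (on_kids_impl IH kids)).
Qed.

Definition labelled_by (s : nat -> seq bool) b := forall j, (0 < j <= N)%N ->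
  forall i, (i < size (s j))%N -> sat w' j (prop S K (b + i)) = nth false (s j) i.

Lemma labelled_by_catl s t b : labelled_by (fun j => s j ++ t j) b -> labelled_by s b.
Proof.
by move=> lab j j_in i i_lt; rewrite lab ?nth_cat ?i_lt // size_cat ltn_addr.
Qed.

Lemma labelled_by_catr s t n b : (forall j, size (s j) = n) ->
  labelled_by (fun j => s j ++ t j) b -> labelled_by t (b + n).
Proof.
move=> size_s lab j j_in i i_lt.
by rewrite -addnA lab ?size_cat ?size_s ?ltn_add2l // nth_cat size_s ltnNge leq_addr addKn.
Qed.

Definition labelled f b := labelled_by (fun j => labs w j f) b.

Lemma labelled_kids f b : labelled f b -> on_kids labelled f b.
Proof.
case: f => [a|g|g|g|g h|l c k] //= lab; try exact: labelled_by_catl lab.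
- split; first exact: labelled_by_catl lab.
  apply: (labelled_by_catl (t := fun j => [:: _])).
  exact: labelled_by_catr (size_labs w ^~ g) lab.
- move/labelled_by_catl: lab; elim: l b => //= a t l IH b lab; split.
  + by case: t lab => //= g; apply: labelled_by_catl.
  + exact/IH/(labelled_by_catr (size_labst w ^~ t) lab).
Qed.

Lemma labelled_agrees f b : labelled f b -> agrees f b.
Proof.
move=> lab j j_in.
have last_lt : ((sz f).-1 < size (labs w j f))%N by rewrite size_labs prednK ?sz_gt0.
by rewrite rootE lab // -(size_labs w j f) nth_last last_labs.
Qed.

Lemma labelled_consistent f b : labelled f b -> consistent f b.
Proof.
move: f b; apply: cform_kids_ind => f b IH lab.
have kids_consistent := on_kids_impl IH (labelled_kids lab).
apply/consistentE; split=> //.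
exact/(constraint_agrees (on_kids_mono consistent_agrees kids_consistent))/labelled_agrees.
Qed.

End Faithfulness.

Fixpoint annotate (A B : Type) (F : nat -> B) (s : seq A) (k : nat) : seq (A * B) :=
  if s is x :: s' then (x, F k) :: annotate F s' k.+1 else [::].

Lemma onth_annotate (A B : Type) (F : nat -> B) (s : seq A) k i :
  onth (annotate F s k) i = omap (fun x => (x, F (k + i)%N)) (onth s i).
Proof. by elim: s k i => [|x s IH] k [|i] //=; rewrite ?addn0 ?IH ?addSnnS. Qed.

Lemma map_fst_annotate (A B : Type) (F : nat -> B) (s : seq A) k :
  map fst (annotate F s k) = s.
Proof. by elim: s k => //= x s IH k; rewrite IH. Qed.

Section Reduction.
Variables (S : finType) (phi : cform S).
Local Notation K := (sz phi).

Lemma models_reduce (w' : seq (ext S K)) :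
  models w' (reduce phi) =
  [&& (0 < size w')%N, all (fun j => all (sat w' j) (cons K phi 0)) (iota 1 (size w'))
    & sat w' (size w') (prop S K (Defs.root phi 0))].
Proof.
rewrite /models /reduce [sat _ _ (And _ _)]/=; congr [&& _, _ & _].
by apply: eq_all => j; rewrite sat_bigAnd.
Qed.

Lemma reduce_sound w' : models w' (reduce phi) -> models (map fst w') phi.
Proof.
rewrite models_reduce => /and3P[N_gt0 /everywhereP cons_ok root_ok].
by rewrite /models size_map N_gt0 -(consistent_agrees cons_ok) ?N_gt0 ?leqnn.
Qed.

Definition label (w : seq S) : seq (ext S K) :=
  annotate (fun j => Tuple (introT eqP (size_labs w j phi))) w 1.

Lemma size_label w : size (label w) = size w.
Proof. by rewrite -(size_map fst) map_fst_annotate. Qed.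

Lemma label_labelled w : labelled (label w) phi 0.
Proof.
move=> j; rewrite size_label => /andP[j_gt0 j_le] i _.
rewrite sat_isLetter onth_annotate map_fst_annotate j_gt0 add1n prednK //.
by case: onth (onthTE w j.-1) => [x|] //= /esym; rewrite prednK // j_le.
Qed.

Lemma reduce_complete w : models w phi -> models (label w) (reduce phi).
Proof.
move=> /andP[w_gt0 w_phi]; have lab := label_labelled (w := w).
have end_in : (0 < size (label w) <= size (label w))%N by rewrite size_label w_gt0 /=.
rewrite models_reduce; apply/and3P; split.
- by rewrite size_label.
- exact/everywhereP/labelled_consistent.
- by rewrite (labelled_agrees lab end_in) map_fst_annotate size_label.
Qed.

End Reduction.

Theorem propositionD1 (S : finType) (phi : cform S) :
  (dp (reduce phi) <= 2)%N /\ (satisfiable phi <-> satisfiable (reduce phi)).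
Proof.
split; first exact: dp_reduce.
split=> [[w w_phi] | [w' w'_red]].
- by exists (label phi w); apply: reduce_complete.
- by exists (map fst w'); apply: reduce_sound.
Qed.
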